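(* Let $H$ be the graph consisting of two triangles $uv_1v_2$ and $uw_1w_2$ sharing exactly the vertex $u$. Let $G$ be a graph with $n$ vertices obtained from $H$ by attaching $k\ge1$ pendant edges (new leaves) to vertices of $H$, none of them to $u$, such that the pendant edges are attached to exactly $d$ of the vertices $v_1,v_2,w_1,w_2$, where $1\le d\le 4$. If $d\ge 2$, then $\operatorname{avm}(G)>\operatorname{avm}(R_n(3,3))$.
   Context: $\operatorname{avm}(G)$ is the average of $|M|$ over all maximal matchings $M$ of $G$ (a matching is maximal if not properly contained in another matching). For $n\ge 6$, $R_n(3,3)$ is the graph obtained from $H$ by attaching $n-5$ pendant edges (new leaves) to $v_1$. *)

From mathcomp Require Import all_boot all_order all_algebra.
Set Implicit Arguments. Unset Strict Implicit. Unset Printing Implicit Defensive.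
Import GRing.Theory Num.Theory.

(* A simple graph on a finite vertex type T is given by an adjacency relation e
   (assumed symmetric and irreflexive for the graphs used below).
   An edge is a 2-element vertex set {x,y} with e x y. *)
Definition is_edge (T : finType) (e : rel T) (A : {set T}) : bool :=
  [exists x, exists y, e x y && (A == [set x; y])].

Definition is_matching (T : finType) (e : rel T) (M : {set {set T}}) : bool :=
  [forall A in M, is_edge e A] &&
  [forall A in M, forall B in M, (A != B) ==> [disjoint A & B]].

Definition is_maximal_matching (T : finType) (e : rel T) (M : {set {set T}}) : bool :=
  is_matching e M &&
  [forall N : {set {set T}}, (is_matching e N && (M \proper N)) ==> false].

Definition avm (T : finType) (e : rel T) : rat :=
  (\sum_(M : {set {set T}} | is_maximal_matching e M) (#|M|)%:R)
  / (#|[set M : {set {set T}} | is_maximal_matching e M]|)%:R.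

(* The graph H: vertices 0 = u, 1 = v1, 2 = v2, 3 = w1, 4 = w2;
   triangles u v1 v2 and u w1 w2 sharing exactly u. *)
Definition H_adj (i j : 'I_5) : bool :=
  (nat_of_ord i, nat_of_ord j) \in
    [:: (0,1); (1,0); (0,2); (2,0); (1,2); (2,1);
        (0,3); (3,0); (0,4); (4,0); (3,4); (4,3)]%N.

(* H with k pendant edges (new leaves): leaf l is attached to the vertex
   (f l).+1 of H, i.e. to one of v1 (f l = 0), v2 (1), w1 (2), w2 (3);
   in particular never to u. *)
Definition pendant_adj (k : nat) (f : 'I_k -> 'I_4) : rel ('I_5 + 'I_k) :=
  fun x y =>
    match x, y with
    | inl a, inl b => H_adj a b
    | inl a, inr l => nat_of_ord a == (f l).+1
    | inr l, inl a => nat_of_ord a == (f l).+1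
    | inr _, inr _ => false
    end.

Definition R33 (n : nat) : rel ('I_5 + 'I_(n - 5)) :=
  pendant_adj (fun _ : 'I_(n - 5) => (ord0 : 'I_4)).
Arguments R33 n : clear implicits.

From mathcomp Require Import all_boot all_order all_algebra zify.
Import Order.TTheory GRing.Theory Num.Theory.
Set Implicit Arguments. Unset Strict Implicit. Unset Printing Implicit Defensive.

(* A matching of H with pendant leaves is determined by the edges of H it uses
   and, for each of v1, v2, w1, w2, the leaf (if any) that vertex is matched to.
   Whether it is maximal depends only on its shape -- which edges of H it uses
   and which of v1, v2, w1, w2 it matches to leaves -- and on which of these
   vertices carry leaves; a shape matching the vertices of X to leaves is
   realised by prod_(x in X) a_x matchings, a_x being the number of leaves at x.
   Enumerating the 2^10 shapes thus turns the number N and the total size S of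
   the maximal matchings into explicit polynomials in the a_x.  For R_n(3,3)
   they are 3(n-5)+4 and 7(n-5)+8, so its avm is below 7/3; when at least two
   of v1, v2, w1, w2 carry leaves, 3S > 7N in each of the eleven possible
   patterns, so avm(G) > 7/3. *)

(** * Maximal matchings of a graph *)

Section Matchings.
Variables (T : finType) (e : rel T).
Implicit Types (M N : {set {set T}}) (A B : {set T}).

Definition mdeg M (x : T) : nat := #|[set A in M | x \in A]|.

Definition edge_dominating M : bool :=
  [forall x, forall y, e x y ==> (0 < mdeg M x) || (0 < mdeg M y)].

Lemma mdeg_gt0P M x : reflect (exists2 A, A \in M & x \in A) (0 < mdeg M x).
Proof.
apply: (iffP card_gt0P) => [[A]|[A AM xA]]; last by exists A; rewrite inE AM.
by rewrite inE => /andP[]; exists A.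
Qed.

Lemma matchingE M :
  is_matching e M = [forall A in M, is_edge e A] && [forall x, mdeg M x <= 1].
Proof.
congr andb; apply/forallP/forallP => [disjM x | deg1 A].
  apply/card_le1_eqP => A B; rewrite !inE => /andP[AM xA] /andP[BM xB].
  apply/eqP/negPn/negP; rewrite eq_sym => AB.
  have := disjM A; rewrite AM => /forall_inP/(_ B BM); rewrite AB => /pred0P/(_ x).
  by rewrite /= xA xB.
apply/implyP => AM; apply/forall_inP => B BM; apply/implyP => AB.
apply/pred0P => x /=; apply/negbTE/negP => /andP[xA xB].
have /card_le1_eqP/(_ A B) := deg1 x; rewrite !inE AM BM xA xB => /(_ isT isT) AeB.
by rewrite AeB eqxx in AB.
Qed.

Lemma matching_mem_eq M A B x :
  is_matching e M -> A \in M -> B \in M -> x \in A -> x \in B -> A = B.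
Proof.
rewrite matchingE => /andP[_ /forallP/(_ x)/card_le1_eqP deg1] AM BM xA xB.
by apply: deg1; rewrite inE ?AM ?BM.
Qed.

Lemma mdeg_setU1 M A x : mdeg (A |: M) x <= (x \in A) + mdeg M x.
Proof.
rewrite /mdeg (_ : [set B in A |: M | x \in B] =
   [set B in [set A] | x \in B] :|: [set B in M | x \in B]); last first.
  by apply/setP => B; rewrite !inE andb_orl.
rewrite (leq_trans (leq_card_setU _ _)) // leq_add2r.
have [xA|xA] := boolP (x \in A).
  rewrite /= -(cards1 A) subset_leq_card //; apply/subsetP => B; rewrite !inE.
  by case/andP.
rewrite leqn0 cards_eq0; apply/eqP/setP => B; rewrite !inE.
by apply/negbTE/andP => -[/eqP ->]; apply/negP.
Qed.

Lemma maximal_matchingE M : is_maximal_matching e M = is_matching e M && edge_dominating M.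
Proof.
rewrite /is_maximal_matching; have [matchM|] //= := boolP (is_matching e M).
move: (matchM); rewrite matchingE => /andP[edgeM /forallP degM].
apply/forallP/forallP => [maxM x | domM N].
  apply/forallP => y; apply/implyP => exy; apply/negPn/negP.
  rewrite negb_or -!leqNgt !leqn0 => /andP[/eqP x0 /eqP y0].
  have xyM : [set x; y] \notin M.
    apply/negP => xyM; suff: 0 < mdeg M x by rewrite x0.
    by apply/mdeg_gt0P; exists [set x; y]; rewrite ?set21.
  have := maxM ([set x; y] |: M); rewrite implybF => /negP; apply; apply/andP; split.
    rewrite matchingE; apply/andP; split.
      apply/forall_inP => A; rewrite in_setU1 => /predU1P[->|AM].
        by apply/existsP; exists x; apply/existsP; exists y; rewrite exy eqxx.
      by move/forall_inP: edgeM; apply.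
    apply/forallP => z; rewrite (leq_trans (mdeg_setU1 _ _ _)) //.
    by have [/set2P[]->|_] := boolP (z \in [set x; y]); rewrite ?set21 ?set22 ?x0 ?y0 ?degM.
  by apply: properUr; rewrite sub1set.
apply/implyP => /andP[matchN /properP[sMN [A AN AM]]].
move: matchN; rewrite matchingE => /andP[/forall_inP/(_ A AN) edgeA /forallP degN].
have coveredA z : z \in A -> 0 < mdeg M z -> false.
  move=> zA /mdeg_gt0P[B BM zB].
  have /card_le1_eqP/(_ B A) := degN z; rewrite !inE AN (subsetP sMN) // zA zB.
  by move=> /(_ isT isT) AB; rewrite AB BM in AM.
case/existsP: edgeA => x /existsP[y /andP[exy /eqP defA]].
have /forallP/(_ y) := domM x; rewrite exy /= => /orP[].
  by apply: coveredA; rewrite defA set21.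
by apply: coveredA; rewrite defA set22.
Qed.
End Matchings.

(** * Counting through bit sequences *)

Lemma sum_partition_seq (A : finType) (B : eqType) (phi : A -> B) (s : seq B)
    (P : pred A) (G : B -> nat) :
  uniq s -> (forall a, phi a \in s) ->
  \sum_(a | P a) G (phi a) = \sum_(b <- s) G b * #|[set a | P a && (phi a == b)]|.
Proof.
move=> s_uniq s_phi.
under [RHS]eq_bigr => b _ do
  rewrite mulnC -sum_nat_cond_const big_mkcondr.
rewrite exchange_big /=; apply: eq_bigr => a _.
rewrite -big_mkcond /= (eq_bigr (fun=> G (phi a))) => [|b /eqP <- //].
rewrite big_const_seq.
have -> : count (fun b => phi a == b) s = 1.
  by rewrite (eq_count (fun b => eq_sym _ b)) count_uniq_mem ?s_phi.
by rewrite /= addn0.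
Qed.

Fixpoint bitseqs (n : nat) : seq (seq bool) :=
  if n is n'.+1 then [seq b :: s | b <- [:: true; false], s <- bitseqs n'] else [:: [::]].

Lemma mem_bitseqs n s : (s \in bitseqs n) = (size s == n).
Proof.
elim: n s => [|n IHn] [|b s] //=; rewrite !mem_cat orbF.
  by apply/negbTE/negP => /orP[] /mapP[].
rewrite eqSS -IHn; apply/orP/idP => [[] /mapP[s' ? [_ ->]] // | sn].
by case: b; [left | right]; apply/mapP; exists s.
Qed.

Lemma bitseqs_uniq n : uniq (bitseqs n).
Proof.
by elim: n => // n IHn; apply: allpairs_uniq => // -[b s] [b' s'] _ _ [-> ->].
Qed.

Definition bits n (g : 'I_n -> bool) : seq bool := [seq g i | i <- enum 'I_n].

Lemma size_bits n (g : 'I_n -> bool) : size (bits g) = n.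
Proof. by rewrite size_map size_enum_ord. Qed.

Lemma nth_bits n (g : 'I_n -> bool) (i : 'I_n) : nth false (bits g) i = g i.
Proof. by rewrite (nth_map i) ?nth_ord_enum // size_enum_ord. Qed.

Lemma count_bits n (g : 'I_n -> bool) : count id (bits g) = #|[set i | g i]|.
Proof.
by rewrite count_map cardsE cardE /enum_mem size_filter (@eq_filter _ _ predT) ?filter_predT.
Qed.

Lemma bits_eq n (g : 'I_n -> bool) (s : seq bool) :
  size s = n -> (bits g == s) = [forall i, g i == nth false s i].
Proof.
move=> sn; apply/eqP/forallP => [<- i | gs]; first by rewrite nth_bits.
apply: (eq_from_nth (x0 := false)) => [|i]; rewrite size_bits // => ltin.
by rewrite -[i]/(val (Ordinal ltin)) nth_bits (eqP (gs _)).
Qed.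

Lemma card_ord_count n (P : pred nat) : #|[set i : 'I_n | P i]| = count P (iota 0 n).
Proof.
by rewrite cardsE cardE /enum_mem -enumT size_filter -val_enum_ord count_map.
Qed.

Lemma card_ffun_bits n (A : finType) (Q : 'I_n -> pred A) (P : pred A) (s : seq bool) :
  size s = n ->
  #|[set g : {ffun 'I_n -> A} | [forall i, Q i (g i)] && (bits (fun i => P (g i)) == s)]| =
  \prod_(i < n) #|[pred a | Q i a && (P a == nth false s i)]|.
Proof.
move=> sn; pose F i := [pred a | Q i a && (P a == nth false s i)].
transitivity #|family F|; last by rewrite card_family foldrE big_map big_enum.
apply: eq_card => g; rewrite inE bits_eq //.
apply/andP/familyP => [[/forallP Qg /forallP Pg] i | Fg]; first by rewrite inE Qg Pg.
by split; apply/forallP => i; have /andP[] := Fg i.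
Qed.

Lemma all_iotaP n (P : pred nat) : reflect (forall i, i < n -> P i) (all P (iota 0 n)).
Proof.
apply: (iffP allP) => all_i i; first by move=> ltin; apply: all_i; rewrite mem_iota.
by rewrite mem_iota => /andP[_]; apply: all_i.
Qed.

(** * Shapes of matchings of H with pendant leaves *)

Definition H_edges : seq (nat * nat) := [:: (0, 1); (0, 2); (1, 2); (0, 3); (0, 4); (3, 4)].
Definition H_ends (j : nat) : seq nat := let: (x, y) := nth (0, 0) H_edges j in [:: x; y].

Lemma H_adjE (a b : 'I_5) :
  H_adj a b = ((a : nat, b : nat) \in H_edges) || ((b : nat, a : nat) \in H_edges).
Proof. by case: a b => [[|[|[|[|[|a]]]]] ?] [[|[|[|[|[|b]]]]] ?]. Qed.

Lemma H_ends_lt j : all (gtn 5) (H_ends j).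
Proof. by rewrite /H_ends; do 6?[case: j => [|j] //]; rewrite nth_default. Qed.

Lemma H_edges_lt x y : (x, y) \in H_edges -> (x < 5) && (y < 5).
Proof.
case/(nthP (0, 0)) => j _ ej; have := H_ends_lt j; rewrite /H_ends ej.
by case/and3P=> x5 y5 _; apply/andP.
Qed.

Lemma H_ends_inj j j' : j < 6 -> j' < 6 -> {subset H_ends j <= H_ends j'} -> j = j'.
Proof.
have: all (fun j => all (fun j' =>
          all (mem (H_ends j')) (H_ends j) ==> (j == j')) (iota 0 6)) (iota 0 6) by [].
move=> /all_iotaP H_inj lt_j lt_j' sub; apply/eqP.
by have /all_iotaP/(_ j' lt_j')/implyP := H_inj j lt_j; apply; apply/allP.
Qed.

(* A shape (b, c) lists the edges of H used (b, indexed as in H_edges) and the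
   vertices among v1, v2, w1, w2 matched to a leaf (c, vertex x.+1 at index x);
   cover_count counts the edges of the shape at the vertex v of H.  In
   valid_shape d, d records which of v1, v2, w1, w2 carry leaves. *)
Definition cover_count (sigma : seq bool * seq bool) (v : nat) : nat :=
  count (fun j => nth false sigma.1 j && (v \in H_ends j)) (iota 0 6)
  + ((0 < v) && nth false sigma.2 v.-1).

Definition valid_shape (d : seq bool) (sigma : seq bool * seq bool) : bool :=
  [&& all (fun v => cover_count sigma v <= 1) (iota 0 5),
      all (fun p => (0 < cover_count sigma p.1) || (0 < cover_count sigma p.2)) H_edges,
      all (fun x => nth false d x ==> (0 < cover_count sigma x.+1)) (iota 0 4) &
      all (fun x => nth false sigma.2 x ==> nth false d x) (iota 0 4)].

Definition shapes : seq (seq bool * seq bool) := [seq (b, c) | b <- bitseqs 6, c <- bitseqs 4].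

Lemma uniq_shapes : uniq shapes.
Proof. by rewrite allpairs_uniq ?bitseqs_uniq // => -[b c] [b' c'] _ _ [-> ->]. Qed.

(** * Coding the matchings of H with pendant leaves *)

Section PendantGraph.
Variables (k : nat) (f : 'I_k -> 'I_4).
Local Notation T := ('I_5 + 'I_k)%type.
Local Notation e := (pendant_adj f).

Definition hv (v : nat) : T := inl (inord v).
Definition H_edge (j : nat) : {set T} := let: (x, y) := nth (0, 0) H_edges j in [set hv x; hv y].
Definition leaf_edge (l : 'I_k) : {set T} := [set hv (f l).+1; inr l].

Lemma attach_lt l : (f l).+1 < 5.
Proof. exact: (ltn_ord (f l)). Qed.

Lemma hv_eq v w : v < 5 -> w < 5 -> (hv v == hv w) = (v == w).
Proof.
move=> v5 w5; apply/eqP/eqP => [[]|-> //].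
by move/(congr1 val); rewrite /= !inordK.
Qed.

Lemma inl_hv (a : 'I_5) : inl a = hv a.
Proof. by rewrite /hv inord_val. Qed.

Lemma mem_hv_H_edge v j : v < 5 -> (hv v \in H_edge j) = (v \in H_ends j).
Proof.
move=> v5; have := H_ends_lt j; rewrite /H_edge /H_ends.
by case: nth => x y /and3P[x5 y5 _]; rewrite !inE !hv_eq.
Qed.

Lemma inr_H_edge l j : (inr l \in H_edge j) = false.
Proof. by rewrite /H_edge; case: nth => x y; rewrite !inE. Qed.

Lemma mem_hv_leaf_edge v l : v < 5 -> (hv v \in leaf_edge l) = (v == (f l).+1).
Proof. by move=> v5; rewrite !inE hv_eq ?orbF ?attach_lt. Qed.

Lemma inr_leaf_edge l' l : (inr l' \in leaf_edge l) = (l' == l).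
Proof. by rewrite !inE. Qed.

Lemma H_edge_inj j j' : j < 6 -> j' < 6 -> H_edge j = H_edge j' -> j = j'.
Proof.
move=> lt_j lt_j' eq_jj'; apply: H_ends_inj => // v vj.
have v5 := allP (H_ends_lt j) v vj.
by rewrite -mem_hv_H_edge // -eq_jj' mem_hv_H_edge.
Qed.

Lemma H_edge_neq_leaf_edge j l : H_edge j != leaf_edge l.
Proof. by apply/eqP => /setP/(_ (inr l)); rewrite inr_H_edge inr_leaf_edge eqxx. Qed.

Lemma leaf_edge_inj : injective leaf_edge.
Proof. by move=> l l' /setP/(_ (inr l)); rewrite !inr_leaf_edge eqxx => /esym/eqP. Qed.

Lemma H_edges_adj x y : (x, y) \in H_edges -> e (hv x) (hv y).
Proof.
by move=> xyH; have /andP[x5 y5] := H_edges_lt xyH; rewrite /= H_adjE !inordK // xyH.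
Qed.

Lemma is_edge_H_edge j : j < 6 -> is_edge e (H_edge j).
Proof.
move=> lt_j; have := mem_nth (0, 0) (lt_j : j < size H_edges); rewrite /H_edge.
case: nth => x y xyH; apply/existsP; exists (hv x); apply/existsP; exists (hv y).
by rewrite H_edges_adj ?eqxx.
Qed.

Lemma is_edge_leaf_edge l : is_edge e (leaf_edge l).
Proof.
apply/existsP; exists (hv (f l).+1); apply/existsP; exists (inr l).
by rewrite eqxx andbT /= inordK ?attach_lt.
Qed.

Lemma pendant_edge_cases A : is_edge e A ->
  (exists j : 'I_6, A = H_edge j) \/ (exists l, A = leaf_edge l).
Proof.
case/existsP => [[a|l] /existsP[[b|l'] /andP[/= exy /eqP ->]]]; last by [].
- left; move: exy; rewrite H_adjE => /orP[] /(nthP (0, 0))[j lt_j ej]; exists (Ordinal lt_j).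
    by rewrite /H_edge ej /hv !inord_val.
  by rewrite /H_edge ej /hv !inord_val setUC.
- by right; exists l'; rewrite /leaf_edge /hv -(eqP exy) inord_val.
- by right; exists l; rewrite /leaf_edge setUC /hv -(eqP exy) inord_val.
Qed.

Definition leaves_at (x : nat) : nat := #|[set l | f l == x :> nat]|.
Definition has_leaves : seq bool := [seq 0 < leaves_at x | x <- iota 0 4].
Definition weight (c : seq bool) : nat :=
  \prod_(0 <= x < 4) (if nth false c x then leaves_at x else 1).

(* A code lists the H-edges used and, at each attachment vertex x, the leaf
   matched to x; leaf_choice excludes codes naming a leaf not hanging at x. *)
Definition code := ({ffun 'I_6 -> bool} * {ffun 'I_4 -> option 'I_k})%type.
Implicit Types (q : code) (c : {ffun 'I_4 -> option 'I_k}) (M : {set {set T}}).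

Definition leaf_at (x : 'I_4) (o : option 'I_k) : bool :=
  if o is Some l then f l == x else true.
Definition leaf_choice c : bool := [forall x, leaf_at x (c x)].
Definition chosen_leaves c : {set 'I_k} := [set l | c (f l) == Some l].

Definition matching_of_code q : {set {set T}} :=
  [set H_edge j | j : 'I_6 & q.1 j] :|: [set leaf_edge l | l in chosen_leaves q.2].
Definition code_of_matching M : code :=
  ([ffun j : 'I_6 => H_edge j \in M],
   [ffun x => [pick l | (f l == x) && (leaf_edge l \in M)]]).
Definition code_shape q : seq bool * seq bool := (bits q.1, bits (fun x => q.2 x != None)).

Lemma mem_code_H_edge q (j : 'I_6) : (H_edge j \in matching_of_code q) = q.1 j.
Proof.
rewrite in_setU; apply/orP/idP => [[]|qj]; last by left; apply: imset_f; rewrite inE.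
  case/imsetP => j' qj' /(H_edge_inj (ltn_ord j) (ltn_ord j'))/val_inj ->.
  by rewrite inE in qj'.
by case/imsetP => l _ /eqP; rewrite (negbTE (H_edge_neq_leaf_edge _ _)).
Qed.

Lemma mem_code_leaf_edge q l : (leaf_edge l \in matching_of_code q) = (l \in chosen_leaves q.2).
Proof.
rewrite in_setU; apply/orP/idP => [[]|lc]; last by right; apply: imset_f.
  by case/imsetP => j _ /esym/eqP; rewrite (negbTE (H_edge_neq_leaf_edge _ _)).
by case/imsetP => l' l'c /leaf_edge_inj ->.
Qed.

Lemma leaf_choice_code_of_matching M : leaf_choice (code_of_matching M).2.
Proof. by apply/forallP => x; rewrite ffunE; case: pickP => [l /andP[]|]. Qed.

Lemma code_of_matchingK q : leaf_choice q.2 -> code_of_matching (matching_of_code q) = q.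
Proof.
case: q => b c /forallP lc; congr pair; apply/ffunP => x; rewrite ffunE.
  exact: mem_code_H_edge.
have := lc x; case cx: (c x) => [l|] /= => [/eqP fl|_].
  case: pickP => [l' /andP[/eqP fl']|/(_ l)].
    by rewrite mem_code_leaf_edge inE fl' cx => /eqP [->].
  by rewrite fl eqxx mem_code_leaf_edge inE fl cx eqxx.
case: pickP => [l' /andP[/eqP fl']|//].
by rewrite mem_code_leaf_edge inE fl' cx.
Qed.

Lemma chosen_code_of_matching M l :
  is_matching e M -> (l \in chosen_leaves (code_of_matching M).2) = (leaf_edge l \in M).
Proof.
move=> matchM; rewrite inE ffunE; case: pickP => [l' /andP[fl' l'M]|/(_ l)].
  apply/eqP/idP => [[<-] // | lM]; congr Some; apply: leaf_edge_inj.
  apply: (matching_mem_eq (x := hv (f l).+1) matchM l'M lM).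
    by rewrite /leaf_edge -(eqP fl') set21.
  by rewrite set21.
by rewrite eqxx /= => ->.
Qed.

Lemma matching_of_codeK M : is_matching e M -> matching_of_code (code_of_matching M) = M.
Proof.
move=> matchM; apply/setP => A; apply/idP/idP.
  case/setUP => /imsetP[j jq ->]; first by rewrite inE ffunE in jq.
  by rewrite -chosen_code_of_matching.
move=> AM; have := matchM; rewrite matchingE => /andP[/forall_inP/(_ A AM) edgeA _].
move: AM; case/pendant_edge_cases: edgeA => [[j ->]|[l ->]].
  by rewrite mem_code_H_edge ffunE.
by rewrite mem_code_leaf_edge chosen_code_of_matching.
Qed.

Lemma card_matching_of_code_sub q (P : pred {set T}) :
  #|[set A in matching_of_code q | P A]| =
  #|[set j : 'I_6 | q.1 j && P (H_edge j)]| + #|[set l in chosen_leaves q.2 | P (leaf_edge l)]|.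
Proof.
rewrite (_ : [set A in _ | P A] =
             (fun j : 'I_6 => H_edge j) @: [set j | q.1 j && P (H_edge j)]
             :|: leaf_edge @: [set l in chosen_leaves q.2 | P (leaf_edge l)]).
  rewrite cardsU (_ : _ :&: _ = set0) ?cards0 ?subn0; last first.
    apply/setP => A; rewrite in_setI in_set0.
    apply/andP => -[/imsetP[j _ ->] /imsetP[l _ /eqP]].
    by rewrite (negbTE (H_edge_neq_leaf_edge _ _)).
  rewrite card_in_imset => [|j j' _ _ /(H_edge_inj (ltn_ord j) (ltn_ord j'))/val_inj //].
  by rewrite card_in_imset // => l l' _ _ /leaf_edge_inj.
apply/setP => A; rewrite inE; apply/andP/setUP => [[/setUP[] /imsetP[x xq ->] PA]|].
- by left; apply: imset_f; rewrite inE in xq; rewrite !inE xq.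
- by right; apply: imset_f; rewrite inE xq.
case=> /imsetP[x]; rewrite inE => /andP[xq Px] ->; split=> //; apply/setUP.
  by left; apply: imset_f; rewrite inE.
by right; apply: imset_f.
Qed.

Lemma card_chosen_leaves_at c (x : 'I_4) :
  leaf_choice c -> #|[set l in chosen_leaves c | f l == x]| = (c x != None).
Proof.
move=> /forallP/(_ x); case cx: (c x) => [l|] /= => [/eqP fl|_].
  rewrite (_ : [set _ in _ | _] = [set l]) ?cards1 //; apply/setP => l'; rewrite !inE.
  apply/andP/eqP => [[/eqP cl' /eqP fl']|->]; last by rewrite fl cx.
  by move: cl'; rewrite fl' cx => -[].
apply/eqP; rewrite cards_eq0; apply/eqP/setP => l; rewrite !inE.
by apply/negbTE/andP => -[/eqP + /eqP fl]; rewrite fl cx.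
Qed.

Lemma card_chosen_leaves c : leaf_choice c -> #|chosen_leaves c| = #|[set x | c x != None]|.
Proof.
move=> lc; rewrite -(@card_in_imset _ _ f) => [|l l']; last first.
  by rewrite !inE => /eqP cl /eqP cl' fl; move: cl'; rewrite -fl cl => -[].
apply: eq_card => x; rewrite inE; apply/imsetP/idP => [[l] | ].
  by rewrite inE => /eqP cl ->; rewrite cl.
move: lc => /forallP/(_ x); case cx: (c x) => [l|] // /eqP fl _.
by exists l; rewrite // inE fl cx.
Qed.

Lemma card_matching_of_code q : leaf_choice q.2 ->
  #|matching_of_code q| = count id (code_shape q).1 + count id (code_shape q).2.
Proof.
move=> lc; transitivity #|[set A in matching_of_code q | true]|.
  by apply: eq_card => A; rewrite inE andbT.
rewrite card_matching_of_code_sub /= !count_bits -card_chosen_leaves //.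
by congr addn; apply: eq_card => x; rewrite !inE andbT.
Qed.

Lemma mdeg_code_inr q l : mdeg (matching_of_code q) (inr l) = (l \in chosen_leaves q.2).
Proof.
rewrite /mdeg card_matching_of_code_sub (_ : [set j : 'I_6 | _] = set0) ?cards0; last first.
  by apply/setP => j; rewrite !inE inr_H_edge andbF.
case: (boolP (l \in chosen_leaves q.2)) => lc.
  rewrite (_ : [set _ in _ | _] = [set l]) ?cards1 //.
  apply/setP => l'; rewrite in_set in_set1 inr_leaf_edge eq_sym.
  by case: eqP => [->|]; rewrite ?lc ?andbF.
apply/eqP; rewrite cards_eq0; apply/eqP/setP => l'; rewrite in_set in_set0 inr_leaf_edge.
by apply/negbTE/andP => -[+ /eqP eq_l]; rewrite -eq_l; apply/negP.
Qed.

Lemma mdeg_code_hv q v : leaf_choice q.2 -> v < 5 ->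
  mdeg (matching_of_code q) (hv v) = cover_count (code_shape q) v.
Proof.
move=> lc lt_v; rewrite /mdeg card_matching_of_code_sub /cover_count; congr addn.
  by rewrite -card_ord_count; apply: eq_card => j; rewrite !inE nth_bits mem_hv_H_edge.
case: v lt_v => [|x] lt_x /=.
  apply/eqP; rewrite cards_eq0; apply/eqP/setP => l.
  by rewrite in_set in_set0 mem_hv_leaf_edge // andbF.
rewrite -[x]/(val (Ordinal (lt_x : x < 4))) nth_bits -card_chosen_leaves_at //.
by apply: eq_card => l; rewrite !inE hv_eq ?attach_lt // orbF eqSS [_ == (f l : nat)]eq_sym.
Qed.

Lemma is_matching_codeE q : leaf_choice q.2 ->
  is_matching e (matching_of_code q) = all (fun v => cover_count (code_shape q) v <= 1) (iota 0 5).
Proof.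
move=> lc; rewrite matchingE (_ : [forall A in _, _] = true); last first.
  apply/forall_inP => A /setUP[] /imsetP[x _ ->]; first exact: is_edge_H_edge.
  exact: is_edge_leaf_edge.
apply/forallP/all_iotaP => [deg1 v lt_v | deg1 [a|l]]; first by rewrite -mdeg_code_hv ?deg1.
  by rewrite inl_hv mdeg_code_hv ?deg1.
by rewrite mdeg_code_inr leq_b1.
Qed.

Lemma leaf_edge_coveredE q l :
  (0 < mdeg (matching_of_code q) (hv (f l).+1)) || (0 < mdeg (matching_of_code q) (inr l)) =
  (0 < mdeg (matching_of_code q) (hv (f l).+1)).
Proof.
rewrite mdeg_code_inr orbC; case: (boolP (l \in _)) => //= lc; apply/esym/mdeg_gt0P.
by exists (leaf_edge l); rewrite ?mem_code_leaf_edge // set21.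
Qed.

Lemma has_leavesE (x : 'I_4) : nth false has_leaves x = [exists l, f l == x].
Proof.
rewrite (nth_map 0) ?size_iota // nth_iota // add0n.
by apply/card_gt0P/existsP => -[l fl]; exists l; rewrite inE in fl *.
Qed.

Lemma edge_dominating_codeE q : leaf_choice q.2 ->
  edge_dominating e (matching_of_code q) =
  all (fun p => (0 < cover_count (code_shape q) p.1) || (0 < cover_count (code_shape q) p.2))
      H_edges &&
  all (fun x => nth false has_leaves x ==> (0 < cover_count (code_shape q) x.+1)) (iota 0 4).
Proof.
move=> lc; apply/forallP/andP => [dom | [/allP domH /all_iotaP domL]].
  split.
    apply/allP => -[x y] xyH; have /andP[x5 y5] := H_edges_lt xyH.
    have /forallP/(_ (hv y))/implyP := dom (hv x); rewrite -!mdeg_code_hv //.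
    by apply; apply: H_edges_adj.
  apply/all_iotaP => x lt_x; rewrite -[x]/(val (Ordinal lt_x)) has_leavesE.
  apply/implyP => /existsP[l /eqP fl]; rewrite -mdeg_code_hv // -fl -leaf_edge_coveredE.
  have /forallP/(_ (inr l))/implyP := dom (hv (f l).+1); apply.
  by rewrite /= inordK ?attach_lt.
have covered_attach l : 0 < mdeg (matching_of_code q) (hv (f l).+1).
  rewrite mdeg_code_hv ?attach_lt //; apply: (implyP (domL _ (ltn_ord (f l)))).
  by rewrite has_leavesE; apply/existsP; exists l.
case=> [a|l]; apply/forallP => -[b|l']; apply/implyP => //= exy.
- rewrite !inl_hv !mdeg_code_hv //; move: exy; rewrite H_adjE => /orP[] /domH //.
  by rewrite orbC.
- by rewrite inl_hv (eqP exy) leaf_edge_coveredE covered_attach.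
- by rewrite orbC inl_hv (eqP exy) leaf_edge_coveredE covered_attach.
Qed.

Lemma code_shape_leaves q : leaf_choice q.2 ->
  all (fun x => nth false (code_shape q).2 x ==> nth false has_leaves x) (iota 0 4).
Proof.
move=> /forallP lc; apply/all_iotaP => x lt_x.
rewrite -[x]/(val (Ordinal lt_x)) nth_bits has_leavesE.
by have := lc (Ordinal lt_x); case: (q.2 _) => // l fl; apply/existsP; exists l.
Qed.

Lemma maximal_matching_codeE q : leaf_choice q.2 ->
  is_maximal_matching e (matching_of_code q) = valid_shape has_leaves (code_shape q).
Proof.
move=> lc; rewrite maximal_matchingE is_matching_codeE // edge_dominating_codeE //.
by rewrite /valid_shape code_shape_leaves // andbT andbA.
Qed.

Lemma code_shape_in_shapes q : code_shape q \in shapes.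
Proof. by apply: allpairs_f; rewrite mem_bitseqs size_bits. Qed.

Lemma card_code_fiber sigma : sigma \in shapes ->
  #|[set q : code | leaf_choice q.2 && (code_shape q == sigma)]| = weight sigma.2.
Proof.
case/allpairsP => -[b c] [b6 c4 ->]; move: b6 c4; rewrite !mem_bitseqs /= => /eqP b6 /eqP c4.
have -> : [set q : code | leaf_choice q.2 && (code_shape q == (b, c))] =
  setX [set g : {ffun 'I_6 -> bool} |
          [forall i, predT (g i)] && (bits (fun i => id (g i)) == b)]
       [set g : {ffun 'I_4 -> option 'I_k} |
          [forall x, leaf_at x (g x)] && (bits (fun x => g x != None) == c)].
  apply/setP => -[g h]; rewrite !inE xpair_eqE /=.
  have -> : [forall i, predT (g i)] by apply/forallP.
  by rewrite andbCA.
rewrite cardsX (card_ffun_bits (fun=> predT) id) //.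
rewrite (card_ffun_bits leaf_at (fun o => o != None)) //.
rewrite big1 ?mul1n /weight ?big_mkord => [|i _].
  apply: eq_bigr => x _; case: (nth false c x).
    rewrite /= /leaves_at -(card_imset _ (@Some_inj _)); apply: eq_card => -[l|].
      by rewrite mem_imset; [rewrite !inE /= andbT | exact: Some_inj].
    by rewrite !inE /=; apply/esym/imsetP => -[].
  by rewrite -[RHS](card1 (None : option 'I_k)); apply: eq_card => -[l|]; rewrite !inE /= ?andbF.
by rewrite -[RHS](card1 (nth false b i)); apply: eq_card => a; rewrite !inE.
Qed.

Lemma sum_maximal_matchings (F : nat -> nat) :
  \sum_(M | is_maximal_matching e M) F #|M| =
  \sum_(sigma <- shapes | valid_shape has_leaves sigma)
     F (count id sigma.1 + count id sigma.2) * weight sigma.2.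
Proof.
rewrite (reindex_onto matching_of_code code_of_matching) => [|M /andP[matchM _]]; last first.
  exact: matching_of_codeK.
rewrite (eq_bigl (fun q => leaf_choice q.2 && valid_shape has_leaves (code_shape q))) => [|q].
  pose G sigma :=
    if valid_shape has_leaves sigma then F (count id sigma.1 + count id sigma.2) else 0.
  rewrite big_mkcondr (eq_bigr (fun q => G (code_shape q))) => [|q lc]; last first.
    by rewrite /G card_matching_of_code.
  rewrite (sum_partition_seq _ G uniq_shapes code_shape_in_shapes) [RHS]big_mkcond /=.
  by apply: eq_big_seq => sigma /card_code_fiber ->; rewrite /G; case: ifP.
have [lc|nlc] := boolP (leaf_choice q.2).
  by rewrite code_of_matchingK // eqxx andbT maximal_matching_codeE.
by apply/andP => -[_ /eqP eq_q]; move: nlc; rewrite -eq_q leaf_choice_code_of_matching.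
Qed.

End PendantGraph.

(** * Counting, and the comparison with R_n(3,3) *)

Lemma has_leaves_list k (f : 'I_k -> 'I_4) :
  has_leaves f = [:: 0 < leaves_at f 0; 0 < leaves_at f 1; 0 < leaves_at f 2; 0 < leaves_at f 3].
Proof. by []. Qed.

Lemma card_attached k (f : 'I_k -> 'I_4) : #|[set f i | i in 'I_k]| = count id (has_leaves f).
Proof.
rewrite count_map -card_ord_count; apply: eq_card => x; rewrite !inE.
apply/imsetP/card_gt0P => [[l _ ->] | [l]]; first by exists l; rewrite inE.
by rewrite inE => /eqP/val_inj <-; exists l.
Qed.

(* Unlocking bigop lets simpl evaluate the sums over the computed list of
   valid shapes. *)
Ltac expand_shape_sums :=
  match goal with |- context [filter ?P shapes] =>
    let v := eval vm_compute in (filter P shapes) in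
    rewrite (_ : filter P shapes = v); last by vm_compute end;
  rewrite /weight unlock /=.

Definition maxm_count (T : finType) (e : rel T) : nat := \sum_(M | is_maximal_matching e M) 1.
Definition maxm_size (T : finType) (e : rel T) : nat := \sum_(M | is_maximal_matching e M) #|M|.

Lemma maxm_pendant_bound k (f : 'I_k -> 'I_4) : 2 <= #|[set f i | i in 'I_k]| ->
  0 < maxm_count (pendant_adj f) /\ 7 * maxm_count (pendant_adj f) < 3 * maxm_size (pendant_adj f).
Proof.
rewrite card_attached /maxm_count /maxm_size.
rewrite (sum_maximal_matchings f (fun=> 1)) (sum_maximal_matchings f id).
rewrite -!(big_filter shapes) has_leaves_list.
have [Z0|P0] := posnP (leaves_at f 0); have [Z1|P1] := posnP (leaves_at f 1);
have [Z2|P2] := posnP (leaves_at f 2); have [Z3|P3] := posnP (leaves_at f 3);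
rewrite ?Z0 ?Z1 ?Z2 ?Z3 ?P0 ?P1 ?P2 ?P3 => spread; try by exfalso; move: spread; apply/negP.
all: by expand_shape_sums; split; nia.
Qed.

Lemma maxm_R33 n : 5 < n ->
  maxm_count (R33 n) = 3 * (n - 5) + 4 /\ maxm_size (R33 n) = 7 * (n - 5) + 8.
Proof.
move=> lt5n; pose f := fun _ : 'I_(n - 5) => (ord0 : 'I_4).
have leaves0 : leaves_at f 0 = n - 5.
  by rewrite /leaves_at (_ : [set l | _] = setT) ?cardsT ?card_ord //; apply/setP.
have leaves_pos x : 0 < x -> leaves_at f x = 0.
  move=> x_gt0; apply/eqP; rewrite cards_eq0; apply/eqP/setP => l.
  by rewrite !inE /f /=; case: x x_gt0.
rewrite /maxm_count /maxm_size /R33.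
rewrite (sum_maximal_matchings f (fun=> 1)) (sum_maximal_matchings f id).
rewrite -!(big_filter shapes) has_leaves_list leaves0 !leaves_pos // subn_gt0 lt5n.
by expand_shape_sums; split; lia.
Qed.

Local Open Scope ring_scope.

Lemma avmE (T : finType) (e : rel T) : avm e = (maxm_size e)%:R / (maxm_count e)%:R.
Proof.
by rewrite /avm natr_sum -sum1_card; congr (_ / _%:R); apply: eq_bigl => M; rewrite inE.
Qed.

Lemma ltr_nat_ratio (a b c d : nat) : (0 < b)%N -> (0 < d)%N ->
  (a%:R / b%:R < c%:R / d%:R :> rat) = (a * d < c * b)%N.
Proof.
move=> b_gt0 d_gt0.
by rewrite ltr_pdivrMr ?ltr0n // mulrAC ltr_pdivlMr ?ltr0n // -!natrM ltr_nat.
Qed.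

Theorem lemma3p5 (n k : nat) (f : 'I_k -> 'I_4) :
  (1 <= k)%N -> n = (5 + k)%N -> (2 <= #|[set f i | i in 'I_k]|)%N ->
  avm (R33 n) < avm (pendant_adj f).
Proof.
move=> k_gt0 -> spread.
have lt5n : (5 < 5 + k)%N by lia.
have [countR sizeR] := maxm_R33 lt5n.
have [countG_gt0 boundG] := maxm_pendant_bound spread.
rewrite !avmE countR sizeR; apply: (@lt_trans _ _ (7%:R / 3%:R)); rewrite ltr_nat_ratio //; lia.
Qed.
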